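(* Let $A\in\mathbb{R}^{m\times n}$, $b\in\mathcal{R}(A)$, and let $f:\mathbb{R}^n\to\mathbb{R}$ be $\alpha$-strongly convex. Let $\hat x$ be the unique solution of $\min_{x\in\mathbb{R}^n} f(x)$ subject to $Ax=b$, and assume that the subdifferential mapping $\partial f$ is calm at $\hat x$ and that the collection $\{\partial f(\hat x),\mathcal{R}(A^T)\}$ is linearly regular. Let $I_1,\dots,I_r$ be a (not necessarily disjoint) covering of $\{1,\dots,m\}$, let $A_i$ be the submatrix of rows of $A$ indexed by $I_i$ and $b_i$ the subvector of $b$ indexed by $I_i$, and assign each index $i\in\{1,\dots,r\}$ arbitrarily either to $I_C$ or to $I_Q$. Run the algorithm described in the context with $x_0^*\in\mathcal{R}(A^T)$, $x_0=\nabla f^*(x_0^* )$ and probabilities $p_i>0$. Then the iterates converge in expectation to $\hat x$ at a linear rate: there are constants $q\in(0,1)$ and $c>0$ such that for all $k$ \[ \mathbb{E}\left[D_f^{x_{k+1}^*}(x_{k+1},\hat x)\right] \le q\cdot \mathbb{E}\left[D_f^{x_k^*}(x_k,\hat x)\right] \quad\text{and}\quad \mathbb{E}\left[\|x_k-\hat x\|_2\right]\le c\cdot q^{k/2}. \]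
   Context: $f$ is $\alpha$-strongly convex ($\alpha>0$) if $f(y)\ge f(x)+\langle x^*,y-x\rangle+\frac{\alpha}{2}\|y-x\|_2^2$ for all $x,y$, $x^*\in\partial f(x)$; its conjugate $f^*(x^* )=\sup_x\langle x^*,x\rangle-f(x)$ is then differentiable with Lipschitz gradient. Bregman distance: $D_f^{x^*}(x,y)=f(y)-f(x)-\langle x^*,y-x\rangle$. $\mathcal{R}(\cdot)$ is the range. A set-valued map $S:\mathbb{R}^n\rightrightarrows\mathbb{R}^n$ is calm at $\hat x$ if $S(\hat x)\neq\emptyset$ and there are $\epsilon,L>0$ with $S(x)\subset S(\hat x)+L\|x-\hat x\|_2 B_1$ whenever $\|x-\hat x\|_2\le\epsilon$, where $B_1$ is the closed Euclidean unit ball. Two closed convex sets $D_1,D_2$ with nonempty intersection are linearly regular if there is $\gamma>0$ with $\operatorname{dist}(x,D_1\cap D_2)^2\le\gamma(\operatorname{dist}(x,D_1)^2+\operatorname{dist}(x,D_2)^2)$ for all $x\in\mathbb{R}^n$ (Euclidean distances). Algorithm: for $k=0,1,\dots$ choose $i_k\in\{1,\dots,r\}$ independently with $P(i_k=i)=p_i$ ($\sum p_i=1$); write $i=i_k$. If $i\in I_C$: let $\hat w$ be a minimizer of $w\mapsto f^*(x_k^*-A_i^Tw)+\langle w,b_i\rangle$ and set $x_{k+1}^*=x_k^*-A_i^T\hat w$, $x_{k+1}=\nabla f^*(x_{k+1}^* )$ (this $x_{k+1}$ is the Bregman projection of $x_k$ onto $\{x:A_ix=b_i\}$, i.e. the minimizer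 of $D_f^{x_k^*}(x_k,\cdot)$ over that set). If $i\in I_Q$ (with $Q_i=\{b_i\}$): set $w_k=A_ix_k-b_i$, $\beta_k=\langle A_i^Tw_k,x_k\rangle-\|w_k\|_2^2$, let $t_k$ minimize $t\mapsto f^*(x_k^*-tA_i^Tw_k)+t\beta_k$ over $t\in\mathbb{R}$, and set $x_{k+1}^*=x_k^*-t_kA_i^Tw_k$, $x_{k+1}=\nabla f^*(x_{k+1}^* )$ (the Bregman projection of $x_k$ onto the half-space $\{x:\langle A_i^Tw_k,x\rangle\le\beta_k\}$); if $w_k=0$ then $x_{k+1}=x_k$, $x_{k+1}^*=x_k^*$. Expectations are over the random indices. *)

From HB Require Import structures.
From mathcomp Require Import all_boot all_order all_algebra.
From mathcomp Require Import boolp classical_sets reals.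
Set Implicit Arguments. Unset Strict Implicit. Unset Printing Implicit Defensive.
Import Order.TTheory GRing.Theory Num.Theory.
Local Open Scope ring_scope.
Local Open Scope classical_set_scope.

Section Defs.
Variable R : realType.

Definition dotv n (u v : 'cV[R]_n) : R := \sum_(j < n) u j 0 * v j 0.
Definition norm2 n (u : 'cV[R]_n) : R := Num.sqrt (dotv u u).

Definition convex_fun n (f : 'cV[R]_n -> R) :=
  forall x y (t : R), 0 <= t <= 1 ->
    f (t *: x + (1 - t) *: y) <= t * f x + (1 - t) * f y.

Definition subdiff n (f : 'cV[R]_n -> R) (x : 'cV[R]_n) : set 'cV[R]_n :=
  [set xs | forall y, f y >= f x + dotv xs (y - x)].

Definition strongly_convex n (alpha : R) (f : 'cV[R]_n -> R) :=
  0 < alpha /\ convex_fun f /\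
  forall x y xs, subdiff f x xs ->
    f y >= f x + dotv xs (y - x) + alpha / 2 * norm2 (y - x) ^+ 2.

Definition conj_fun n (f : 'cV[R]_n -> R) (xs : 'cV[R]_n) : R :=
  sup [set r | exists x, r = dotv xs x - f x].

Definition has_grad n (F : 'cV[R]_n -> R) (y g : 'cV[R]_n) :=
  forall eps : R, 0 < eps -> exists delta : R, 0 < delta /\
    forall h, norm2 h < delta ->
      `|F (y + h) - F y - dotv g h| <= eps * norm2 h.

Definition bregman n (f : 'cV[R]_n -> R) (xs x y : 'cV[R]_n) : R :=
  f y - f x - dotv xs (y - x).

Definition calm n (S : 'cV[R]_n -> set 'cV[R]_n) (xh : 'cV[R]_n) :=
  S xh !=set0 /\ exists eps L : R, 0 < eps /\ 0 < L /\
    forall x, norm2 (x - xh) <= eps ->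
      forall y, S x y -> exists z u, S xh z /\ norm2 u <= 1 /\
        y = z + (L * norm2 (x - xh)) *: u.

Definition dist_set n (x : 'cV[R]_n) (D : set 'cV[R]_n) : R :=
  inf [set r | exists y, D y /\ r = norm2 (x - y)].

Definition lin_regular n (D1 D2 : set 'cV[R]_n) :=
  (D1 `&` D2) !=set0 /\ exists gamma : R, 0 < gamma /\
    forall x, dist_set x (D1 `&` D2) ^+ 2 <=
              gamma * (dist_set x D1 ^+ 2 + dist_set x D2 ^+ 2).

Definition mrange m n (M : 'M[R]_(m, n)) : set 'cV[R]_m :=
  [set y | exists x, y = M *m x].

Definition subrows m n (A : 'M[R]_(m, n)) (I : {set 'I_m}) : 'M[R]_(#|I|, n) :=
  \matrix_(k < #|I|, l < n) A (enum_val k) l.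
Definition subvec m (b : 'cV[R]_m) (I : {set 'I_m}) : 'cV[R]_#|I| :=
  \col_(k < #|I|) b (enum_val k) 0.

Definition is_argmin (T : Type) (F : T -> R) (t : T) := forall t', F t <= F t'.

Definition alg_step m n r (f : 'cV[R]_n -> R) (A : 'M[R]_(m, n)) (b : 'cV[R]_m)
  (I : 'I_r -> {set 'I_m}) (inC : 'I_r -> bool) (i : 'I_r)
  (xs x xs' : 'cV[R]_n) : Prop :=
  let Ai := subrows A (I i) in
  let bi := subvec b (I i) in
  if inC i then
    exists wh : 'cV[R]_#|I i|,
      is_argmin (fun w => conj_fun f (xs - Ai^T *m w) + dotv w bi) wh /\
      xs' = xs - Ai^T *m wh
  else
    let w := Ai *m x - bi in
    let beta := dotv (Ai^T *m w) x - norm2 w ^+ 2 in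
    if w == 0 then xs' = xs else
    exists t : R,
      is_argmin (fun t' => conj_fun f (xs - t' *: (Ai^T *m w)) + t' * beta) t /\
      xs' = xs - t *: (Ai^T *m w).

(* Expectation of g(iterate) after k steps: the iterate depends only on the
   first k (i.i.d.) indices. *)
Definition expect r (p : 'I_r -> R) (k : nat) (g : seq 'I_r -> R) : R :=
  \sum_(s : k.-tuple 'I_r) (\prod_(i <- s) p i) * g s.

End Defs.

(* Each step is a Bregman projection of x_k onto a set containing xhat (the block
   hyperplane {A_i x = b_i}, or a half-space through xhat), so the three-point identity gives
   D_{k+1} + alpha/2 |x_{k+1} - x_k|^2 <= D_k for D_k = D_f^{x_k^*}(x_k, xhat), and
   |x_{k+1} - x_k|^2 dominates a multiple of the block residual |A_i x_k - b_i|^2. As the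
   blocks cover all rows, averaging over the random block yields
   E[D_{k+1} | x_k] <= D_k - a |A x_k - b|^2. Calmness of ∂f at xhat and linear regularity of
   {∂f(xhat), R(A^T)} give the error bound D_k <= C |A x_k - b|^2 along the iterates (the dual
   iterates stay in R(A^T) and, as D_k <= D_0, in a bounded set), whence E[D_{k+1}] <= q E[D_k].
   Finally alpha/2 |x_k - xhat|^2 <= D_k and AM-GM turn this into E|x_k - xhat| <= c q^(k/2).
   The relation x_k^* ∈ ∂f(x_k) behind all these estimates is derived from the
   differentiability of f^* at x_k^*, using that the finite convex f is lower semicontinuous. *)

From HB Require Import structures.
From mathcomp Require Import all_boot all_order all_algebra.
From mathcomp Require Import boolp classical_sets reals.
From mathcomp Require Import ring lra.
Set Implicit Arguments. Unset Strict Implicit. Unset Printing Implicit Defensive.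
Import Order.TTheory GRing.Theory Num.Theory.
Local Open Scope ring_scope.
Local Open Scope classical_set_scope.

Section Euclidean.
Variables (R : realType) (n : nat).
Implicit Types (u v w : 'cV[R]_n) (a : R).

Lemma dotvE u v : dotv u v = (u^T *m v) 0 0.
Proof. by rewrite /dotv !mxE; apply: eq_bigr => j _; rewrite mxE. Qed.

Lemma dotvC u v : dotv u v = dotv v u.
Proof. by rewrite /dotv; apply: eq_bigr => j _; rewrite mulrC. Qed.

Lemma dotvDl u v w : dotv (u + v) w = dotv u w + dotv v w.
Proof. by rewrite !dotvE linearD /= mulmxDl mxE. Qed.

Lemma dotvDr u v w : dotv w (u + v) = dotv w u + dotv w v.
Proof. by rewrite !dotvE mulmxDr mxE. Qed.

Lemma dotvZl a u v : dotv (a *: u) v = a * dotv u v.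
Proof. by rewrite !dotvE linearZ /= -scalemxAl mxE. Qed.

Lemma dotvZr a u v : dotv u (a *: v) = a * dotv u v.
Proof. by rewrite dotvC dotvZl dotvC. Qed.

Lemma dotvNl u v : dotv (- u) v = - dotv u v.
Proof. by rewrite -scaleN1r dotvZl mulN1r. Qed.

Lemma dotvNr u v : dotv u (- v) = - dotv u v.
Proof. by rewrite -scaleN1r dotvZr mulN1r. Qed.

Lemma dotvBl u v w : dotv (u - v) w = dotv u w - dotv v w.
Proof. by rewrite dotvDl dotvNl. Qed.

Lemma dotvBr u v w : dotv w (u - v) = dotv w u - dotv w v.
Proof. by rewrite dotvDr dotvNr. Qed.

Lemma dotv0l v : dotv 0 v = 0.
Proof. by rewrite -(scale0r 0) dotvZl mul0r. Qed.

Lemma dotv0r v : dotv v 0 = 0.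
Proof. by rewrite dotvC dotv0l. Qed.

Lemma dotvv_ge0 u : 0 <= dotv u u.
Proof. by rewrite sumr_ge0 // => j _; rewrite -expr2 sqr_ge0. Qed.

Lemma dotvv_eq0 u : (dotv u u == 0) = (u == 0).
Proof.
apply/idP/eqP => [|->]; last by rewrite dotv0l.
rewrite psumr_eq0 => [/allP u0|j _]; last by rewrite -expr2 sqr_ge0.
apply/matrixP => i j; rewrite (ord1 j) mxE.
by apply/eqP; rewrite -sqrf_eq0 expr2; apply: u0; rewrite mem_index_enum.
Qed.

Lemma norm2_ge0 u : 0 <= norm2 u.
Proof. exact: sqrtr_ge0. Qed.

Lemma norm2_sqr u : norm2 u ^+ 2 = dotv u u.
Proof. by rewrite sqr_sqrtr // dotvv_ge0. Qed.

Lemma norm2_0 : norm2 (0 : 'cV[R]_n) = 0.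
Proof. by rewrite /norm2 dotv0l sqrtr0. Qed.

Lemma norm2Z a v : norm2 (a *: v) = `|a| * norm2 v.
Proof. by rewrite /norm2 dotvZl dotvZr mulrA -expr2 sqrtrM ?sqr_ge0 // sqrtr_sqr. Qed.

Lemma norm2N v : norm2 (- v) = norm2 v.
Proof. by rewrite -scaleN1r norm2Z normrN normr1 mul1r. Qed.

Lemma norm2_distC u v : norm2 (u - v) = norm2 (v - u).
Proof. by rewrite -norm2N opprB. Qed.

Lemma cauchy_schwarz_sqr u v : dotv u v ^+ 2 <= dotv u u * dotv v v.
Proof.
have [->|v0] := eqVneq v 0; first by rewrite dotv0r dotv0l expr0n mulr0.
have vv0 : 0 < dotv v v by rewrite lt_def dotvv_eq0 v0 dotvv_ge0.
have := dotvv_ge0 (dotv v v *: u - dotv u v *: v).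
rewrite dotvBl !dotvBr !dotvZl !dotvZr (dotvC v u); nra.
Qed.

Lemma cauchy_schwarz u v : dotv u v <= norm2 u * norm2 v.
Proof.
rewrite -sqrtrM ?dotvv_ge0 //; apply: le_trans (ler_norm _) _.
by rewrite -sqrtr_sqr ler_sqrt ?mulr_ge0 ?dotvv_ge0 // cauchy_schwarz_sqr.
Qed.

Lemma dotv_delta_mx u j : dotv u (delta_mx j 0) = u j 0.
Proof.
rewrite /dotv (bigD1 j) //= big1 ?addr0; first by rewrite mxE !eqxx mulr1.
by move=> k /negPf kj; rewrite mxE kj mulr0.
Qed.

Lemma abs_coord_le_norm2 u j : `|u j 0| <= norm2 u.
Proof.
rewrite -sqrtr_sqr ler_sqrt ?dotvv_ge0 // /dotv (bigD1 j) //= -expr2 lerDl.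
by rewrite sumr_ge0 // => i _; rewrite -expr2 sqr_ge0.
Qed.

Lemma dotvv_subr_le u v : dotv (u - v) (u - v) <= 2 * dotv u u + 2 * dotv v v.
Proof.
have := dotvv_ge0 (u + v).
rewrite !dotvBl !dotvBr !dotvDl !dotvDr (dotvC v u); lra.
Qed.

End Euclidean.

Lemma dotv_mulmx (R : realType) m n (M : 'M[R]_(m, n)) (u : 'cV[R]_n) (y : 'cV[R]_m) :
  dotv (M *m u) y = dotv u (M^T *m y).
Proof. by rewrite !dotvE trmx_mul mulmxA. Qed.

Section Frobenius.
Variable R : realType.

Definition frob2 m n (M : 'M[R]_(m, n)) : R := \sum_i \sum_j M i j ^+ 2.

Lemma frob2_ge0 m n (M : 'M[R]_(m, n)) : 0 <= frob2 M.
Proof. by apply: sumr_ge0 => i _; apply: sumr_ge0 => j _; apply: sqr_ge0. Qed.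

Lemma frob2_tr m n (M : 'M[R]_(m, n)) : frob2 M^T = frob2 M.
Proof.
by rewrite /frob2 exchange_big; apply: eq_bigr => i _; apply: eq_bigr => j _; rewrite mxE.
Qed.

Lemma norm2_mulmx_sqr_le m n (M : 'M[R]_(m, n)) (v : 'cV[R]_n) :
  norm2 (M *m v) ^+ 2 <= frob2 M * norm2 v ^+ 2.
Proof.
rewrite !norm2_sqr {1}/dotv /frob2 mulr_suml; apply: ler_sum => i _.
have -> : (M *m v) i 0 = dotv (row i M)^T v.
  by rewrite /dotv mxE; apply: eq_bigr => j _; rewrite !mxE.
rewrite -expr2; apply: le_trans (cauchy_schwarz_sqr _ _) _.
apply: ler_wpM2r; first exact: dotvv_ge0.
by rewrite /dotv; apply: ler_sum => j _; rewrite !mxE expr2.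
Qed.

Lemma norm2_mulmx_le m n (M : 'M[R]_(m, n)) (v : 'cV[R]_n) :
  norm2 (M *m v) <= Num.sqrt (frob2 M) * norm2 v.
Proof.
rewrite -ler_sqr ?nnegrE ?mulr_ge0 ?sqrtr_ge0 ?norm2_ge0 //.
by rewrite exprMn (sqr_sqrtr (frob2_ge0 M)) norm2_mulmx_sqr_le.
Qed.

End Frobenius.

Section RowSelection.
Variable R : realType.

Definition selmx m (J : {set 'I_m}) : 'M[R]_(#|J|, m) :=
  \matrix_(k < #|J|, j < m) (enum_val k == j)%:R.

Lemma selmx_mul m p (J : {set 'I_m}) (M : 'M[R]_(m, p)) k l :
  (selmx J *m M) k l = M (enum_val k) l.
Proof.
rewrite mxE (bigD1 (enum_val k)) //= big1 ?addr0; first by rewrite mxE eqxx mul1r.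
by move=> j /negPf jk; rewrite mxE eq_sym jk mul0r.
Qed.

Lemma subrowsE m n (A : 'M[R]_(m, n)) J : subrows A J = selmx J *m A.
Proof. by apply/matrixP => k l; rewrite selmx_mul mxE. Qed.

Lemma subvecE m (b : 'cV[R]_m) J : subvec b J = selmx J *m b.
Proof. by apply/matrixP => k l; rewrite selmx_mul mxE (ord1 l). Qed.

Lemma dotv_selmx m J (v : 'cV[R]_m) :
  dotv (selmx J *m v) (selmx J *m v) = \sum_(j in J) v j 0 ^+ 2.
Proof.
rewrite (big_enum_val (fun j => v j 0 ^+ 2)) /dotv.
by apply: eq_bigr => k _; rewrite selmx_mul expr2.
Qed.

Lemma dotv_le_sum_selmx m r (I : 'I_r -> {set 'I_m}) (v : 'cV[R]_m) :
  (forall j : 'I_m, exists i, j \in I i) ->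
  dotv v v <= \sum_i dotv (selmx (I i) *m v) (selmx (I i) *m v).
Proof.
move=> cover; under eq_bigr => i _ do rewrite dotv_selmx big_mkcond /=.
rewrite exchange_big /dotv; apply: ler_sum => j _.
have [i ji] := cover j; rewrite (bigD1 i) //= ji -expr2 lerDl.
by apply: sumr_ge0 => k _; case: ifP => _ //; apply: sqr_ge0.
Qed.

End RowSelection.
Arguments selmx {R m} J.

Section RealBounds.
Variable R : realFieldType.

Lemma ler_of_sqr_le_mul (a c : R) : 0 <= a -> 0 <= c -> a ^+ 2 <= c * a -> a <= c.
Proof.
move=> a_ge0 c_ge0; have [->|a_neq0] := eqVneq a 0; first by rewrite c_ge0.
by rewrite expr2 (mulrC c) ler_pM2l // lt_def a_neq0.
Qed.

Lemma ler_of_sqr_le_lb (a c d : R) : 0 < d -> d <= a -> a ^+ 2 <= c -> a <= c / d.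
Proof.
move=> d_gt0 d_le a2_le; rewrite ler_pdivlMr //; apply: le_trans a2_le.
by rewrite expr2 ler_wpM2l // (le_trans (ltW d_gt0)).
Qed.

Lemma ler_contraction (h h' rho a C : R) : 0 < a -> 0 <= C -> 0 <= rho ->
  h <= C * rho -> h' <= h - a * rho -> h' <= (1 - a / (C + a)) * h.
Proof.
move=> a_gt0 C_ge0 rho_ge0 h_le h'_le; have Ca_gt0 : 0 < C + a by rewrite ltr_wpDl.
have : h / (C + a) <= rho.
  by rewrite ler_pdivrMr // mulrC mulrDl; have := mulr_ge0 (ltW a_gt0) rho_ge0; lra.
move=> /(ler_wpM2l (ltW a_gt0)).
by rewrite mulrBl mul1r mulrAC -mulrA; lra.
Qed.

Lemma ler_amgm_sqr (a t d g : R) : 0 < a -> 0 < t ->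
  a / 2 * d ^+ 2 <= g -> d <= (a * t)^-1 * g + t / 2.
Proof.
move=> a_gt0 t_gt0 g_ge; have at_gt0 : 0 < a * t by rewrite mulr_gt0.
rewrite -[d](mulKf (lt0r_neq0 at_gt0)) -[t / 2](mulKf (lt0r_neq0 at_gt0)) -mulrDr.
apply: ler_wpM2l; first by rewrite invr_ge0 ltW.
have := mulr_ge0 (ltW a_gt0) (sqr_ge0 (d - t)); nra.
Qed.

End RealBounds.

Section Expectation.
Variables (R : realType) (r : nat) (p : 'I_r -> R).
Implicit Types g : seq 'I_r -> R.

Lemma expect0 g : expect p 0 g = g [::].
Proof.
rewrite /expect (big_pred1 [tuple]) => [|t]; last by apply/esym/eqP; apply: tuple0.
by rewrite big_nil mul1r.
Qed.

Lemma expectS k g : expect p k.+1 g = expect p k (fun s => \sum_i p i * g (rcons s i)).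
Proof.
pose h (si : k.-tuple 'I_r * 'I_r) := [tuple of rcons si.1 si.2].
have h_inj : injective h.
  by move=> [s i] [s' i'] /(congr1 val) /= /rcons_inj [/val_inj -> ->].
have h_bij : bijective h.
  by apply: inj_card_bij h_inj _; rewrite card_prod !card_tuple card_ord expnSr.
rewrite /expect (reindex h) /=; last exact: onW_bij.
under [RHS]eq_bigr => s _ do rewrite mulr_sumr.
rewrite pair_big /=; apply: eq_bigr => -[s i] _ /=.
by rewrite big_rcons /= mulrA.
Qed.

Hypothesis p_ge0 : forall i, 0 <= p i.
Hypothesis p_sum1 : \sum_i p i = 1.

Lemma ler_expect k g1 g2 : (forall s, g1 s <= g2 s) -> expect p k g1 <= expect p k g2.
Proof. by move=> le_g; apply: ler_sum => s _; rewrite ler_wpM2l ?prodr_ge0. Qed.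

Lemma expect_affine k a c g :
  expect p k (fun s => a * g s + c) = a * expect p k g + c.
Proof.
elim: k a c g => [|k IHk] a c g; first by rewrite !expect0.
rewrite !expectS -IHk; congr expect; apply: funext => s.
rewrite mulr_sumr -[c in RHS]mul1r -p_sum1 mulr_suml -big_split /=.
by apply: eq_bigr => i _; ring.
Qed.

Lemma expect_contraction q g : 0 <= q ->
  (forall s, \sum_i p i * g (rcons s i) <= q * g s) ->
  forall k, expect p k.+1 g <= q * expect p k g /\ expect p k g <= q ^+ k * g [::].
Proof.
move=> q_ge0 g_contr.
have contr k : expect p k.+1 g <= q * expect p k g.
  by rewrite expectS -[q * _]addr0 -expect_affine; apply: ler_expect => s; rewrite addr0.
move=> k; split; first exact: contr.
elim: k => [|k IHk]; first by rewrite expect0 expr0 mul1r.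
by apply: le_trans (contr k) _; rewrite exprS -mulrA ler_wpM2l.
Qed.

Lemma expect_le_sqrt_rate (g d : seq 'I_r -> R) a q H k : 0 < a -> 0 < q ->
  (forall s, a / 2 * d s ^+ 2 <= g s) -> expect p k g <= q ^+ k * H ->
  expect p k d <= (H / a + 2^-1) * Num.sqrt q ^+ k.
Proof.
move=> a_gt0 q_gt0 d_le g_le; set t := Num.sqrt q ^+ k.
have t_gt0 : 0 < t by rewrite exprn_gt0 ?sqrtr_gt0.
have t2 : t ^+ 2 = q ^+ k by rewrite -exprM mulnC exprM sqr_sqrtr ?ltW.
apply: le_trans (ler_expect k (fun s => ler_amgm_sqr a_gt0 t_gt0 (d_le s))) _.
rewrite expect_affine -t2 in g_le *.
have at_gt0 : 0 < a * t by rewrite mulr_gt0.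
have inv_ge0 : 0 <= (a * t)^-1 by rewrite invr_ge0 ltW.
have := ler_wpM2l inv_ge0 g_le.
have -> : (a * t)^-1 * (t ^+ 2 * H) = H / a * t by field; rewrite !lt0r_neq0.
rewrite mulrDl; lra.
Qed.

End Expectation.

Section ConvexFunction.
Variables (R : realType) (n : nat) (f : 'cV[R]_n -> R).
Hypothesis f_convex : convex_fun f.

Lemma convex_fun_split x d S (l : R) : 0 <= l < 1 ->
  f (x + (l *: d + S)) <= l * f (x + d) + (1 - l) * f (x + (1 - l)^-1 *: S).
Proof.
move=> /andP[l_ge0 l_lt1]; have l1_neq0 : 1 - l != 0 by rewrite subr_eq0 gt_eqF.
have -> : x + (l *: d + S) = l *: (x + d) + (1 - l) *: (x + (1 - l)^-1 *: S).
  by apply/matrixP => i j; rewrite !mxE; field.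
by apply: f_convex; rewrite l_ge0 ltW.
Qed.

Lemma convex_fun_jensen (I : eqType) (s : seq I) (l : I -> R) (d : I -> 'cV[R]_n) x :
  (forall k, 0 <= l k) -> \sum_(k <- s) l k <= 1 ->
  f (x + \sum_(k <- s) l k *: d k) <= f x + \sum_(k <- s) l k * (f (x + d k) - f x).
Proof.
elim: s l => [|a s IHs] l l_ge0; first by rewrite !big_nil !addr0.
rewrite !big_cons => sum_le1.
have rest_ge0 : 0 <= \sum_(k <- s) l k by rewrite sumr_ge0.
have [la1|la_neq1] := eqVneq (l a) 1.
  have /eqP : \sum_(k <- s) l k = 0 by apply/le_anti; rewrite rest_ge0; lra.
  rewrite psumr_eq0 // => /allP l0.
  rewrite !big_seq !big1 => [|k /l0 /eqP -> |k /l0 /eqP ->]; rewrite ?mul0r ?scale0r //.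
  by rewrite la1 scale1r mul1r !addr0; lra.
have la_lt1 : l a < 1 by rewrite lt_neqAle la_neq1; lra.
have l1_gt0 : 0 < 1 - l a by rewrite subr_gt0.
pose l' k := l k / (1 - l a).
have sum'_le1 : \sum_(k <- s) l' k <= 1 by rewrite -mulr_suml ler_pdivrMr // mul1r; lra.
have IH' := IHs l' (fun k => divr_ge0 (l_ge0 k) (ltW l1_gt0)) sum'_le1.
set S := \sum_(k <- s) l k *: d k; set T := \sum_(k <- s) l k * _.
have eS : \sum_(k <- s) l' k *: d k = (1 - l a)^-1 *: S.
  by rewrite scaler_sumr; apply: eq_bigr => k _; rewrite scalerA mulrC.
have eT : \sum_(k <- s) l' k * (f (x + d k) - f x) = (1 - l a)^-1 * T.
  by rewrite mulr_sumr; apply: eq_bigr => k _; rewrite mulrCA mulrA.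
rewrite {}eS {}eT in IH'.
apply: le_trans (convex_fun_split _ _ _ _) _; first by rewrite l_ge0 la_lt1.
have : (1 - l a) * f (x + (1 - l a)^-1 *: S) <= (1 - l a) * f x + T.
  by rewrite -[T in X in _ <= X](mulVKf (lt0r_neq0 l1_gt0)) -mulrDr ler_pM2l.
rewrite !mulrBl !mul1r; lra.
Qed.

Definition norm1 (v : 'cV[R]_n) : R := \sum_j `|v j 0|.

Definition coord_osc x : R :=
  \sum_j (`|f (x + delta_mx j 0) - f x| + `|f (x - delta_mx j 0) - f x|).

Lemma coord_osc_ge0 x : 0 <= coord_osc x.
Proof. by apply: sumr_ge0 => j _; apply: addr_ge0. Qed.

Lemma coord_osc_ge x j :
  `|f (x + delta_mx j 0) - f x| + `|f (x - delta_mx j 0) - f x| <= coord_osc x.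
Proof. by rewrite /coord_osc (bigD1 j) //= lerDl sumr_ge0 // => i _; apply: addr_ge0. Qed.

Lemma norm1_le_norm2 v : norm1 v <= n%:R * norm2 v.
Proof.
have -> : n%:R * norm2 v = \sum_(j < n) norm2 v by rewrite sumr_const card_ord mulr_natl.
by apply: ler_sum => j _; apply: abs_coord_le_norm2.
Qed.

Lemma convex_fun_le_norm1 x v : norm1 v <= 1 -> f (x + v) <= f x + norm1 v * coord_osc x.
Proof.
move=> v_le1; pose e j : 'cV[R]_n := if 0 <= v j 0 then delta_mx j 0 else - delta_mx j 0.
have ev : v = \sum_(j <- index_enum 'I_n) `|v j 0| *: e j.
  rewrite {1}(matrix_sum_delta v); apply: eq_bigr => j _; rewrite big_ord1 /e.
  case: ifPn => [/ger0_norm -> // | ]; rewrite -ltNge => /ltr0_norm ->.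
  by rewrite scaleNr scalerN opprK.
rewrite [in f (x + v)]ev; apply: le_trans (convex_fun_jensen e x _ _) _ => //.
rewrite lerD2l /norm1 mulr_suml; apply: ler_sum => j _; apply: ler_wpM2l => //.
apply: le_trans (ler_norm _) (le_trans _ (coord_osc_ge x j)).
by rewrite /e; case: ifP => _; rewrite ?lerDl ?lerDr.
Qed.

Lemma convex_fun_ge_norm1 x y :
  norm1 (x - y) <= 1 -> f x - norm1 (x - y) * coord_osc x <= f y.
Proof.
move=> xy_le1; have mid : 2^-1 *: y + (1 - 2^-1) *: (x + (x - y)) = x.
  by apply/matrixP => i j; rewrite !mxE; field.
have := f_convex y (x + (x - y)) (t := 2^-1); rewrite mid.
have := convex_fun_le_norm1 x xy_le1; lra.
Qed.

Lemma convex_fun_lsc x eta : 0 < eta ->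
  exists2 rho, 0 < rho & forall y, norm2 (y - x) < rho -> f x - eta <= f y.
Proof.
move=> eta_gt0; set K := coord_osc x; have K_ge0 : 0 <= K := coord_osc_ge0 x.
set c := Num.min 1 eta; have c_gt0 : 0 < c by rewrite lt_min ltr01.
have [c_le1 c_le_eta] : c <= 1 /\ c <= eta by rewrite !ge_min !lexx ?orbT.
have nK_gt0 : 0 < (n%:R + 1) * (K + 1) by rewrite mulr_gt0 ?ltr_wpDl.
set rho := c / ((n%:R + 1) * (K + 1)).
have rho_gt0 : 0 < rho by rewrite divr_gt0.
have rhoE : rho * ((n%:R + 1) * (K + 1)) = c by rewrite mulfVK ?lt0r_neq0.
exists rho => // y yx_lt.
have := norm1_le_norm2 (x - y); rewrite norm2_distC.
have : n%:R * norm2 (y - x) <= n%:R * rho by rewrite ler_wpM2l ?ler0n ?ltW.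
set a := norm1 _; have n_ge0 : 0 <= n%:R :> R := ler0n _ n.
move=> nN_le a_le; have a_ge0 : 0 <= a by apply: sumr_ge0.
have a_le_c : a * (K + 1) <= c by rewrite -rhoE; nra.
have := convex_fun_ge_norm1 (x := x) (y := y); rewrite -/a -/K; nra.
Qed.

End ConvexFunction.

Section Conjugate.
Variables (R : realType) (n : nat) (f : 'cV[R]_n -> R) (alpha : R).
Hypothesis f_sc : strongly_convex alpha f.
Variables (x0 z0 : 'cV[R]_n).
Hypothesis z0_subgrad : subdiff f x0 z0.

Let alpha_gt0 : 0 < alpha. Proof. by case: f_sc. Qed.
Let f_convex : convex_fun f. Proof. by case: f_sc => _ []. Qed.

Lemma conj_arg_le xs y :
  dotv xs y - f y <= dotv xs x0 - f x0 + dotv (xs - z0) (xs - z0) / (2 * alpha).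
Proof.
have [_ [_ f_grow]] := f_sc; have := f_grow x0 y z0 z0_subgrad; rewrite norm2_sqr.
have -> : dotv xs y = dotv xs x0 + dotv (xs - z0) (y - x0) + dotv z0 (y - x0).
  by rewrite dotvBl !dotvBr; lra.
set a := xs - z0; set u := y - x0; clearbody a u.
have sq : 2 * alpha * dotv a u - alpha ^+ 2 * dotv u u <= dotv a a.
  have := dotvv_ge0 (a - alpha *: u).
  rewrite dotvBl !dotvBr !dotvZl !dotvZr (dotvC u a); lra.
have : dotv a u - alpha / 2 * dotv u u <= dotv a a / (2 * alpha).
  rewrite ler_pdivlMr ?mulr_gt0 //.
  have -> : (dotv a u - alpha / 2 * dotv u u) * (2 * alpha) =
            2 * alpha * dotv a u - alpha ^+ 2 * dotv u u by field.
  exact: sq.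
lra.
Qed.

Lemma has_sup_conj xs : has_sup [set r | exists x, r = dotv xs x - f x].
Proof.
split; first by exists (dotv xs 0 - f 0); exists 0.
exists (dotv xs x0 - f x0 + dotv (xs - z0) (xs - z0) / (2 * alpha)).
by move=> _ [y ->]; apply: conj_arg_le.
Qed.

Lemma fenchel_young xs y : dotv xs y - f y <= conj_fun f xs.
Proof. by apply: (sup_upper_bound (has_sup_conj xs)); exists y. Qed.

(* A near-maximizer [y] gives [f^*(xs + h) >= f^*(xs) - theta + <h, y>]; tested against the
   first-order expansion of [f^*] at [xs] along [h = t (y - x) / |y - x|], this forces [y]
   to be close to [x]. *)
Lemma near_maximizer_close xs x rho : has_grad (conj_fun f) xs x -> 0 < rho ->
  exists2 theta, 0 < theta & forall y,
    conj_fun f xs - theta < dotv xs y - f y -> norm2 (y - x) < rho.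
Proof.
move=> grad rho_gt0; have rho2_gt0 : 0 < rho / 2 by rewrite divr_gt0.
have [del [del_gt0 del_grad]] := grad (rho / 2) rho2_gt0.
have [t t_gt0 t_lt] : exists2 t, 0 < t & t < del by exists (del / 2); lra.
exists (t * rho / 4) => [|y y_near]; first by rewrite divr_gt0 ?mulr_gt0.
set D := norm2 (y - x); have [D0|D_neq0] := eqVneq D 0; first by rewrite D0.
have D_gt0 : 0 < D by rewrite lt_def D_neq0 norm2_ge0.
set h := (t / D) *: (y - x).
have h_norm : norm2 h = t by rewrite norm2Z ger0_norm ?divr_ge0 ?ltW // divfK.
have hyx : dotv h (y - x) = t * D by rewrite dotvZl -norm2_sqr -/D expr2 mulrA divfK.
have h_lt : norm2 h < del by rewrite h_norm.
have := le_trans (ler_norm _) (del_grad h h_lt).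
have := fenchel_young (xs + h) y; rewrite h_norm dotvDl.
move: hyx; rewrite dotvBr (dotvC h x); nra.
Qed.

Lemma grad_conj_fenchel_le xs x : has_grad (conj_fun f) xs x ->
  f x <= dotv xs x - conj_fun f xs.
Proof.
move=> grad; apply/ler_addgt0Pr => e e_gt0; set eta := e / 3.
have eta_gt0 : 0 < eta by rewrite divr_gt0.
have [rho1 rho1_gt0 f_lsc] := convex_fun_lsc f_convex x eta_gt0.
have nxs_gt0 : 0 < norm2 xs + 1 by rewrite ltr_wpDl ?norm2_ge0.
set rho := Num.min rho1 (eta / (norm2 xs + 1)).
have rho_gt0 : 0 < rho by rewrite lt_min rho1_gt0 divr_gt0.
have [rho_le1 rho_le2] : rho <= rho1 /\ rho * (norm2 xs + 1) <= eta.
  by rewrite -ler_pdivlMr // !ge_min !lexx ?orbT.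
have [theta theta_gt0 close] := near_maximizer_close grad rho_gt0.
have min_gt0 : 0 < Num.min theta eta by rewrite lt_min theta_gt0.
have [_ [y ->] y_near] := sup_adherent min_gt0 (has_sup_conj xs).
rewrite -/(conj_fun f xs) in y_near.
have [theta_le eta_le] : Num.min theta eta <= theta /\ Num.min theta eta <= eta.
  by rewrite !ge_min !lexx ?orbT.
have yx_lt : norm2 (y - x) < rho by apply: close; lra.
have fy_ge := f_lsc y (lt_le_trans yx_lt rho_le1).
have : dotv xs (y - x) <= eta.
  apply: le_trans (cauchy_schwarz _ _) _.
  have := norm2_ge0 xs; have := norm2_ge0 (y - x); nra.
move: fy_ge eta_le; rewrite dotvBr /eta; lra.
Qed.

Lemma conj_funE xs x : has_grad (conj_fun f) xs x -> conj_fun f xs = dotv xs x - f x.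
Proof.
move=> grad; apply/le_anti; rewrite fenchel_young andbT.
by have := grad_conj_fenchel_le grad; lra.
Qed.

Lemma grad_conj_subdiff xs x : has_grad (conj_fun f) xs x -> subdiff f x xs.
Proof. by move=> grad y; have := fenchel_young xs y; rewrite (conj_funE grad) dotvBr; lra. Qed.

End Conjugate.

Section Bregman.
Variables (R : realType) (n : nat) (f : 'cV[R]_n -> R).

Lemma bregman_ge_sqr alpha xs x y : strongly_convex alpha f -> subdiff f x xs ->
  alpha / 2 * norm2 (y - x) ^+ 2 <= bregman f xs x y.
Proof. by move=> [_ [_ f_grow]] /(f_grow x y xs); rewrite /bregman; lra. Qed.

Lemma bregman_ge0 alpha xs x y : strongly_convex alpha f -> subdiff f x xs ->
  0 <= bregman f xs x y.
Proof.
move=> f_sc /(bregman_ge_sqr y f_sc); apply: le_trans.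
by case: f_sc => alpha_gt0 _; rewrite mulr_ge0 ?divr_ge0 ?sqr_ge0 ?ltW.
Qed.

Lemma bregman_three_point xs x xs' x' y :
  bregman f xs x y - bregman f xs' x' y = bregman f xs x x' + dotv (xs' - xs) (y - x').
Proof. rewrite /bregman !dotvBl !dotvBr; lra. Qed.

End Bregman.

Section LineMinimum.
Variables (R : realType) (n : nat) (F : 'cV[R]_n -> R).

Lemma grad_line_min_le y g d beta : has_grad F y g ->
  (forall t, F y <= F (y + t *: d) + t * beta) -> dotv g d + beta <= 0.
Proof.
move=> grad y_min; apply/ler_addgt0Pr => e e_gt0; rewrite add0r.
have nd_gt0 : 0 < norm2 d + 1 by rewrite ltr_wpDl ?norm2_ge0.
have [del [del_gt0 del_grad]] := grad (e / (norm2 d + 1)) (divr_gt0 e_gt0 nd_gt0).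
set t := del / (2 * (norm2 d + 1)).
have t_gt0 : 0 < t by rewrite divr_gt0 ?mulr_gt0.
have htd : norm2 ((- t) *: d) = t * norm2 d by rewrite norm2Z normrN gtr0_norm.
have htd_lt : norm2 ((- t) *: d) < del.
  rewrite htd /t mulrAC ltr_pdivrMr ?mulr_gt0 //; have := norm2_ge0 d; nra.
have := le_trans (ler_norm _) (del_grad _ htd_lt); rewrite htd dotvZr.
have := y_min (- t); rewrite mulNr => ymin_t bound.
have : t * (dotv g d + beta) <= t * (e / (norm2 d + 1) * norm2 d) by lra.
rewrite ler_pM2l // => /le_trans; apply.
by rewrite mulrAC ler_pdivrMr // ler_pM2l // lerDl.
Qed.

Lemma grad_line_min y g d beta : has_grad F y g ->
  (forall t, F y <= F (y + t *: d) + t * beta) -> dotv g d + beta = 0.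
Proof.
move=> grad y_min; apply/le_anti; rewrite (grad_line_min_le grad y_min) /=.
have : dotv g (- d) + - beta <= 0.
  by apply: (grad_line_min_le grad) => t; rewrite scalerN -scaleNr mulrN -mulNr.
by rewrite dotvNr; lra.
Qed.

End LineMinimum.

Section BlockStep.
Variables (R : realType) (n k : nat) (f : 'cV[R]_n -> R).
Variables (M : 'M[R]_(k, n)) (c : 'cV[R]_k) (xhat : 'cV[R]_n).
Hypothesis M_xhat : M *m xhat = c.
Variables (xs x xs' x' : 'cV[R]_n).
Hypothesis grad' : has_grad (conj_fun f) xs' x'.

Lemma exact_step_spec wh :
  is_argmin (fun w => conj_fun f (xs - M^T *m w) + dotv w c) wh -> xs' = xs - M^T *m wh ->
  dotv (xs' - xs) (xhat - x') = 0 /\ norm2 (M *m x - c) ^+ 2 <= frob2 M * norm2 (x' - x) ^+ 2.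
Proof.
move=> wh_min xs'E.
have opt e : dotv x' (- (M^T *m e)) + dotv e c = 0.
  apply: (grad_line_min grad') => t; have := wh_min (wh + t *: e).
  by rewrite mulmxDr -scalemxAr opprD addrA -xs'E dotvDl dotvZl scalerN; lra.
have Mx' : M *m x' = c.
  have := opt (c - M *m x'); rewrite dotvNr -dotv_mulmx (dotvC (M *m x')) addrC -dotvBr.
  by move/eqP; rewrite dotvv_eq0 subr_eq0 => /eqP.
split.
  by rewrite xs'E addrC addKr dotvNl dotvC -dotv_mulmx mulmxBr M_xhat Mx' subrr dotv0l oppr0.
by rewrite -Mx' -mulmxBr norm2_distC norm2_mulmx_sqr_le.
Qed.

Lemma halfspace_step_spec t0 :
  let w := M *m x - c in let v := M^T *m w in
  let beta := dotv v x - norm2 w ^+ 2 in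
  is_argmin (fun t => conj_fun f (xs - t *: v) + t * beta) t0 -> xs' = xs - t0 *: v ->
  dotv (xs' - xs) (xhat - x') = 0 /\ norm2 w ^+ 2 <= frob2 M * norm2 (x' - x) ^+ 2.
Proof.
move=> w v beta t0_min xs'E.
have opt : dotv x' (- v) + beta = 0.
  apply: (grad_line_min grad') => t; have := t0_min (t0 + t).
  by rewrite scalerDl opprD addrA -xs'E -scalerN mulrDl; lra.
have betaE : beta = dotv w c.
  rewrite /beta norm2_sqr /v dotvC -dotv_mulmx /w !dotvBl !dotvBr (dotvC c); lra.
have v_xhat : dotv v xhat = dotv w c by rewrite dotvC /v -dotv_mulmx M_xhat dotvC.
split.
  rewrite xs'E addrC addKr dotvNl dotvZl dotvBr v_xhat -betaE (dotvC v).
  by rewrite dotvNr in opt; rewrite (_ : beta - _ = 0) ?mulr0 ?oppr0 //; lra.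
have w2E : norm2 w ^+ 2 = dotv v (x - x').
  by rewrite dotvBr (dotvC v x'); rewrite dotvNr /beta in opt; lra.
have w2_le : norm2 w ^+ 2 <= Num.sqrt (frob2 M) * norm2 w * norm2 (x' - x).
  rewrite w2E norm2_distC; apply: le_trans (cauchy_schwarz _ _) _.
  by rewrite ler_wpM2r ?norm2_ge0 // -(frob2_tr M) norm2_mulmx_le.
rewrite -[frob2 M](sqr_sqrtr (frob2_ge0 M)) -exprMn.
have := norm2_ge0 w; have := mulr_ge0 (sqrtr_ge0 (frob2 M)) (norm2_ge0 (x' - x)); nra.
Qed.

End BlockStep.

Section Distance.
Variables (R : realType) (n : nat).
Implicit Types (v y : 'cV[R]_n) (D : set 'cV[R]_n).

Lemma dist_set_le v D y : D y -> dist_set v D <= norm2 (v - y).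
Proof.
move=> Dy; apply: ge_inf; last by exists y.
by exists 0 => _ [y' [_ ->]]; apply: norm2_ge0.
Qed.

Lemma ler_dist_set v D a : D !=set0 ->
  (forall y, D y -> a <= norm2 (v - y)) -> a <= dist_set v D.
Proof.
move=> [y Dy] a_le; apply: lb_le_inf; first by exists (norm2 (v - y)), y.
by move=> _ [y' [Dy' ->]]; apply: a_le.
Qed.

Lemma dist_set_ge0 v D : D !=set0 -> 0 <= dist_set v D.
Proof. by move=> D_neq0; apply: ler_dist_set => // y _; apply: norm2_ge0. Qed.

Lemma dist_set_mem v D : D v -> dist_set v D = 0.
Proof.
move=> Dv; apply/le_anti; rewrite dist_set_ge0 ?andbT; last by exists v.
by have := dist_set_le v Dv; rewrite subrr norm2_0.
Qed.

Lemma ler_pM_dist_set v D a c : D !=set0 -> 0 <= c ->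
  (forall y, D y -> a <= c * norm2 (v - y)) -> a <= c * dist_set v D.
Proof.
move=> D_neq0 c_ge0 a_le; have [c0|c_neq0] := eqVneq c 0.
  by case: D_neq0 => y /a_le; rewrite c0 !mul0r.
have c_gt0 : 0 < c by rewrite lt_def c_neq0.
by rewrite -ler_pdivrMl //; apply: ler_dist_set => // y /a_le; rewrite ler_pdivrMl.
Qed.

End Distance.

Lemma trmx_pinvmx_range (R : realType) m n (A : 'M[R]_(m, n)) (u : 'cV[R]_n) :
  mrange A^T u -> A^T *m ((pinvmx A)^T *m u) = u.
Proof.
move=> [y ->]; have y_row : ((A^T *m y)^T <= A)%MS by rewrite trmx_mul trmxK submxMl.
by have /(congr1 trmx) := mulmxKpV y_row; rewrite !trmx_mul !trmxK.
Qed.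

Section ErrorBound.
Variables (R : realType) (m n : nat) (A : 'M[R]_(m, n)) (b : 'cV[R]_m).
Variables (alpha : R) (f : 'cV[R]_n -> R) (xhat z0 : 'cV[R]_n) (gamma : R).
Hypothesis f_sc : strongly_convex alpha f.
Hypothesis A_xhat : A *m xhat = b.
Hypothesis z0_subgrad : subdiff f xhat z0.
Hypothesis gamma_gt0 : 0 < gamma.
Hypothesis ST_neq0 : (subdiff f xhat `&` mrange A^T) !=set0.
Hypothesis lin_reg : forall v, dist_set v (subdiff f xhat `&` mrange A^T) ^+ 2 <=
  gamma * (dist_set v (subdiff f xhat) ^+ 2 + dist_set v (mrange A^T) ^+ 2).

Let alpha_gt0 : 0 < alpha. Proof. by case: f_sc. Qed.
(* [u = A^T ((pinvmx A)^T u)] on [R(A^T)], so [kappa |u|] bounds the norm of a preimage. *)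
Let kappa := Num.sqrt (frob2 (pinvmx A)^T).

Lemma bregman_le_residual xs x y : mrange A^T xs ->
  subdiff f xhat y -> mrange A^T y ->
  bregman f xs x xhat <= kappa * norm2 (A *m x - b) * norm2 (xs - y).
Proof.
move=> [u1 xsE] y_subgrad [u2 yE].
have h_le : bregman f xs x xhat <= dotv (y - xs) (xhat - x).
  by have := y_subgrad x; rewrite /bregman !dotvBl !dotvBr; lra.
have yxs_range : mrange A^T (y - xs) by exists (u2 - u1); rewrite xsE yE mulmxBr.
rewrite -(trmx_pinvmx_range yxs_range) dotv_mulmx trmxK (mulmxBr A xhat) A_xhat in h_le.
apply: le_trans h_le (le_trans (cauchy_schwarz _ _) _).
rewrite (norm2_distC b) (norm2_distC xs) mulrAC ler_wpM2r ?norm2_ge0 //.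
exact: norm2_mulmx_le.
Qed.

Lemma bregman_sqr_le_residual xs x z : has_grad (conj_fun f) xs x -> mrange A^T xs ->
  subdiff f xhat z ->
  bregman f xs x xhat ^+ 2 <= kappa ^+ 2 * gamma * norm2 (A *m x - b) ^+ 2 * norm2 (xs - z) ^+ 2.
Proof.
move=> grad xs_range z_subgrad.
have h_ge0 := bregman_ge0 xhat f_sc (grad_conj_subdiff f_sc z0_subgrad grad).
have kr_ge0 : 0 <= kappa * norm2 (A *m x - b) by rewrite mulr_ge0 ?sqrtr_ge0 ?norm2_ge0.
have h_le : bregman f xs x xhat <= kappa * norm2 (A *m x - b) *
    dist_set xs (subdiff f xhat `&` mrange A^T).
  by apply: ler_pM_dist_set => // y [y_subgrad y_range]; apply: bregman_le_residual.
have := lin_reg xs; rewrite (dist_set_mem xs_range) expr0n addr0 /=.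
have := dist_set_le xs z_subgrad; have := dist_set_ge0 xs (ex_intro _ _ z_subgrad).
have := dist_set_ge0 xs ST_neq0.
move: h_le h_ge0; set d1 := dist_set xs _; set d2 := dist_set xs _.
set h := bregman f xs x xhat => h_le h_ge0 d1_ge0 d2_ge0 d2_le d1_le.
have h2 : h ^+ 2 <= (kappa * norm2 (A *m x - b)) ^+ 2 * d1 ^+ 2.
  by rewrite -exprMn ler_sqr // nnegrE mulr_ge0.
have d1N : d1 ^+ 2 <= gamma * norm2 (xs - z) ^+ 2.
  apply: le_trans d1_le (ler_wpM2l (ltW gamma_gt0) _).
  by rewrite ler_sqr // nnegrE norm2_ge0.
apply: le_trans h2 _; rewrite [X in _ <= X](_ : _ =
  (kappa * norm2 (A *m x - b)) ^+ 2 * (gamma * norm2 (xs - z) ^+ 2)); last by ring.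
by rewrite ler_wpM2l ?sqr_ge0.
Qed.

Lemma dual_coord_le xs x j : has_grad (conj_fun f) xs x ->
  `|xs j 0| <= bregman f xs x xhat + coord_osc f xhat.
Proof.
move=> grad; have := conj_funE f_sc z0_subgrad grad.
have := fenchel_young f_sc z0_subgrad xs (xhat + delta_mx j 0).
have := fenchel_young f_sc z0_subgrad xs (xhat - delta_mx j 0).
rewrite /bregman !dotvDr !dotvNr !dotv_delta_mx => le_minus le_plus conjE.
have := coord_osc_ge f xhat j; rewrite ler_norml.
have := ler_norm (f (xhat + delta_mx j 0) - f xhat).
have := ler_norm (f (xhat - delta_mx j 0) - f xhat).
have := normr_ge0 (f (xhat + delta_mx j 0) - f xhat).
have := normr_ge0 (f (xhat - delta_mx j 0) - f xhat).
move=> *; apply/andP; split; lra.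
Qed.

Lemma dual_dotv_le xs x : has_grad (conj_fun f) xs x ->
  dotv xs xs <= n%:R * (bregman f xs x xhat + coord_osc f xhat) ^+ 2.
Proof.
move=> grad; set c := bregman f xs x xhat + coord_osc f xhat.
have -> : n%:R * c ^+ 2 = \sum_(j < n) c ^+ 2 by rewrite sumr_const card_ord mulr_natl.
apply: ler_sum => j _; rewrite -expr2 -real_normK ?num_real // ler_sqr ?nnegrE ?dual_coord_le //.
by rewrite addr_ge0 ?coord_osc_ge0 ?(bregman_ge0 _ f_sc (grad_conj_subdiff f_sc z0_subgrad grad)).
Qed.

Variables (eps L : R).
Hypothesis eps_gt0 : 0 < eps.
Hypothesis L_gt0 : 0 < L.
Hypothesis calm_xhat : forall x, norm2 (x - xhat) <= eps ->
  forall y, subdiff f x y -> exists z u, subdiff f xhat z /\ norm2 u <= 1 /\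
    y = z + (L * norm2 (x - xhat)) *: u.

Lemma bregman_le_residual_near xs x : has_grad (conj_fun f) xs x -> mrange A^T xs ->
  norm2 (x - xhat) <= eps ->
  bregman f xs x xhat <= 2 * kappa ^+ 2 * gamma * L ^+ 2 / alpha * norm2 (A *m x - b) ^+ 2.
Proof.
move=> grad xs_range x_near; have xs_subgrad := grad_conj_subdiff f_sc z0_subgrad grad.
have [z [u [z_subgrad [u_le1 xsE]]]] := calm_xhat x_near xs_subgrad.
have h_sqr := bregman_sqr_le_residual grad xs_range z_subgrad.
have := bregman_ge_sqr xhat f_sc xs_subgrad; rewrite norm2_distC => d_le.
move: h_sqr d_le (bregman_ge0 xhat f_sc xs_subgrad).
have ->: xs - z = (L * norm2 (x - xhat)) *: u by rewrite xsE addrC addKr.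
set h := bregman _ _ _ _; set d := norm2 (x - xhat); set r := norm2 _.
move=> h_sqr d_le h_ge0.
have N2 : norm2 ((L * d) *: u) ^+ 2 <= (L * d) ^+ 2.
  rewrite norm2Z ger0_norm ?(mulr_ge0 (ltW L_gt0) (norm2_ge0 _)) // exprMn.
  by rewrite ler_piMr ?sqr_ge0 // expr_le1 ?norm2_ge0.
have d2 : d ^+ 2 <= 2 / alpha * h.
  have -> : d ^+ 2 = 2 / alpha * (alpha / 2 * d ^+ 2) by field; rewrite lt0r_neq0.
  by rewrite ler_wpM2l // divr_ge0 // ltW.
apply: ler_of_sqr_le_mul => //.
  by rewrite !mulr_ge0 ?ler0n ?sqrtr_ge0 ?invr_ge0 ?(ltW L_gt0) ?(ltW gamma_gt0) ?(ltW alpha_gt0).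
apply: le_trans h_sqr _.
have k_ge0 : 0 <= kappa ^+ 2 * gamma * r ^+ 2.
  exact: mulr_ge0 (mulr_ge0 (sqr_ge0 _) (ltW gamma_gt0)) (sqr_ge0 _).
apply: le_trans (ler_wpM2l k_ge0 N2) _.
rewrite exprMn mulrA; apply: le_trans (ler_wpM2l (mulr_ge0 k_ge0 (sqr_ge0 L)) d2) _.
by rewrite le_eqVlt; apply/orP; left; apply/eqP; field; rewrite lt0r_neq0.
Qed.

Lemma dual_dist_le H xs x : has_grad (conj_fun f) xs x -> bregman f xs x xhat <= H ->
  norm2 (xs - z0) ^+ 2 <= 2 * (n%:R * (H + coord_osc f xhat) ^+ 2) + 2 * dotv z0 z0.
Proof.
move=> grad h_le; have K_ge0 := coord_osc_ge0 f xhat.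
have h_ge0 := bregman_ge0 xhat f_sc (grad_conj_subdiff f_sc z0_subgrad grad).
rewrite norm2_sqr; apply: le_trans (dotvv_subr_le _ _) _.
rewrite lerD2r ler_pM2l // (le_trans (dual_dotv_le grad)) //; apply: ler_wpM2l => //.
by rewrite ler_sqr ?nnegrE ?lerD2r ?(addr_ge0 h_ge0) ?(addr_ge0 (le_trans h_ge0 h_le)).
Qed.

Lemma bregman_le_residual_far M xs x : has_grad (conj_fun f) xs x -> mrange A^T xs ->
  eps < norm2 (x - xhat) -> norm2 (xs - z0) ^+ 2 <= M ->
  bregman f xs x xhat <= kappa ^+ 2 * gamma * M / (alpha / 2 * eps ^+ 2) * norm2 (A *m x - b) ^+ 2.
Proof.
move=> grad xs_range x_far xsz0_le; have xs_subgrad := grad_conj_subdiff f_sc z0_subgrad grad.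
have del_le : alpha / 2 * eps ^+ 2 <= bregman f xs x xhat.
  apply: le_trans (bregman_ge_sqr xhat f_sc xs_subgrad); rewrite norm2_distC.
  apply: ler_wpM2l; first by rewrite divr_ge0 // ltW.
  by rewrite ler_sqr ?nnegrE ?norm2_ge0 ?(ltW eps_gt0) ?(ltW x_far).
rewrite mulrAC; apply: (ler_of_sqr_le_lb _ del_le); first by rewrite mulr_gt0 ?divr_gt0 ?exprn_gt0.
apply: le_trans (bregman_sqr_le_residual grad xs_range z0_subgrad) _.
rewrite [X in _ <= X](_ : _ = kappa ^+ 2 * gamma * norm2 (A *m x - b) ^+ 2 * M); last by ring.
apply: ler_wpM2l xsz0_le.
exact: mulr_ge0 (mulr_ge0 (sqr_ge0 _) (ltW gamma_gt0)) (sqr_ge0 _).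
Qed.

Lemma bregman_error_bound H : exists2 C, 0 < C & forall xs x,
  has_grad (conj_fun f) xs x -> mrange A^T xs -> bregman f xs x xhat <= H ->
  bregman f xs x xhat <= C * norm2 (A *m x - b) ^+ 2.
Proof.
pose C1 := 2 * kappa ^+ 2 * gamma * L ^+ 2 / alpha.
pose M := 2 * (n%:R * (H + coord_osc f xhat) ^+ 2) + 2 * dotv z0 z0.
pose C2 := kappa ^+ 2 * gamma * M / (alpha / 2 * eps ^+ 2).
exists (Num.max 1 (Num.max C1 C2)) => [|xs x grad xs_range h_le]; first by rewrite lt_max ltr01.
have [x_near|x_far] := lerP (norm2 (x - xhat)) eps.
- apply: le_trans (bregman_le_residual_near grad xs_range x_near) _.
  by rewrite ler_wpM2r ?sqr_ge0 // !le_max lexx !orbT.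
- apply: le_trans (bregman_le_residual_far grad xs_range x_far (dual_dist_le grad h_le)) _.
  by rewrite ler_wpM2r ?sqr_ge0 // !le_max lexx !orbT.
Qed.

End ErrorBound.

Section AlgorithmStep.
Variables (R : realType) (m n r : nat) (A : 'M[R]_(m, n)) (b : 'cV[R]_m).
Variables (f : 'cV[R]_n -> R) (xhat : 'cV[R]_n).
Variables (I : 'I_r -> {set 'I_m}) (inC : 'I_r -> bool).
Hypothesis A_xhat : A *m xhat = b.

Lemma alg_step_spec i xs x xs' x' :
  has_grad (conj_fun f) xs' x' -> alg_step f A b I inC i xs x xs' ->
  [/\ exists u, xs' = xs - A^T *m u,
      dotv (xs' - xs) (xhat - x') = 0 &
      dotv (selmx (I i) *m (A *m x - b)) (selmx (I i) *m (A *m x - b))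
        <= frob2 (subrows A (I i)) * norm2 (x' - x) ^+ 2].
Proof.
move=> grad'; rewrite /alg_step subrowsE subvecE.
have Ai_xhat : (selmx (I i) *m A) *m xhat = selmx (I i) *m b by rewrite -mulmxA A_xhat.
have residualE : selmx (I i) *m (A *m x - b) = (selmx (I i) *m A) *m x - selmx (I i) *m b.
  by rewrite mulmxBr mulmxA.
have trE u : (selmx (I i) *m A)^T *m u = A^T *m ((selmx (I i))^T *m u).
  by rewrite trmx_mul mulmxA.
rewrite residualE -norm2_sqr; case: (inC i) => /=.
  move=> [wh [wh_min xs'E]]; have [orth res] := exact_step_spec Ai_xhat x grad' wh_min xs'E.
  by split=> //; exists ((selmx (I i))^T *m wh); rewrite xs'E trE.
case: eqP => [w0 ->|_ [t0 [t0_min xs'E]]].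
  split; [by exists 0; rewrite mulmx0 subr0 | by rewrite subrr dotv0l |].
  by rewrite w0 norm2_0 expr0n mulr_ge0 ?frob2_ge0 ?sqr_ge0.
have [orth res] := halfspace_step_spec Ai_xhat grad' t0_min xs'E.
split=> //; exists ((selmx (I i))^T *m (t0 *: ((selmx (I i) *m A) *m x - selmx (I i) *m b))).
by rewrite xs'E scalemxAr trE.
Qed.

End AlgorithmStep.

Section Iterates.
Variables (R : realType) (m n r : nat) (A : 'M[R]_(m, n)) (b : 'cV[R]_m).
Variables (alpha : R) (f : 'cV[R]_n -> R) (xhat z0 : 'cV[R]_n).
Variables (I : 'I_r -> {set 'I_m}) (inC : 'I_r -> bool) (p : 'I_r -> R).
Variables (xs xss : seq 'I_r -> 'cV[R]_n).
Hypothesis f_sc : strongly_convex alpha f.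
Hypothesis A_xhat : A *m xhat = b.
Hypothesis z0_subgrad : subdiff f xhat z0.
Hypothesis grad : forall s, has_grad (conj_fun f) (xss s) (xs s).
Hypothesis step : forall s i, alg_step f A b I inC i (xss s) (xs s) (xss (rcons s i)).

Lemma iterate_range : mrange A^T (xss [::]) -> forall s, mrange A^T (xss s).
Proof.
move=> range0; elim/last_ind => [|s i [u xssE]] //.
have [[v ->] _ _] := alg_step_spec A_xhat (grad (rcons s i)) (step s i).
by exists (u - v); rewrite xssE mulmxBr.
Qed.

Lemma bregman_iterate_step s i :
  bregman f (xss (rcons s i)) (xs (rcons s i)) xhat + alpha / 2 * norm2 (xs (rcons s i) - xs s) ^+ 2
    <= bregman f (xss s) (xs s) xhat.
Proof.
have [_ orth _] := alg_step_spec A_xhat (grad (rcons s i)) (step s i).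
have := bregman_three_point f (xss s) (xs s) (xss (rcons s i)) (xs (rcons s i)) xhat.
rewrite orth addr0 => three_point.
have := bregman_ge_sqr (xs (rcons s i)) f_sc (grad_conj_subdiff f_sc z0_subgrad (grad s)); lra.
Qed.

Lemma bregman_iterate_le s : bregman f (xss s) (xs s) xhat <= bregman f (xss [::]) (xs [::]) xhat.
Proof.
elim/last_ind: s => [|s i IHs] //; apply: le_trans IHs; apply: le_trans (bregman_iterate_step s i).
by rewrite lerDl mulr_ge0 ?sqr_ge0 // divr_ge0 // ltW; case: f_sc.
Qed.

Hypothesis cover : forall j : 'I_m, exists i, j \in I i.
Hypothesis p_gt0 : forall i, 0 < p i.
Hypothesis p_sum1 : \sum_i p i = 1.

Lemma bregman_iterate_residual_step K s i : 0 < K -> frob2 (subrows A (I i)) <= K ->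
  bregman f (xss (rcons s i)) (xs (rcons s i)) xhat <= bregman f (xss s) (xs s) xhat -
    alpha / (2 * K) * dotv (selmx (I i) *m (A *m xs s - b)) (selmx (I i) *m (A *m xs s - b)).
Proof.
move=> K_gt0 Fi_le; have [_ _ res] := alg_step_spec A_xhat (grad (rcons s i)) (step s i).
have := bregman_iterate_step s i; set d2 := norm2 _ ^+ 2; set rho := dotv _ _ => decr.
have alpha_gt0 : 0 < alpha by case: f_sc.
have : alpha / (2 * K) * rho <= alpha / (2 * K) * (K * d2).
  apply: ler_wpM2l; first by rewrite divr_ge0 ?mulr_ge0 ?ltW.
  exact: le_trans res (ler_wpM2r (sqr_ge0 _) Fi_le).
have -> : alpha / (2 * K) * (K * d2) = alpha / 2 * d2 by field; rewrite lt0r_neq0.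
lra.
Qed.

Lemma expected_bregman_decrease : exists2 a, 0 < a & forall s,
  \sum_i p i * bregman f (xss (rcons s i)) (xs (rcons s i)) xhat <=
    bregman f (xss s) (xs s) xhat - a * dotv (A *m xs s - b) (A *m xs s - b).
Proof.
pose K := 1 + \sum_i frob2 (subrows A (I i)).
have K_gt0 : 0 < K by rewrite ltr_wpDr // sumr_ge0 // => k _; apply: frob2_ge0.
have Fi_le i : frob2 (subrows A (I i)) <= K.
  by rewrite /K (bigD1 i) //= addrCA lerDl addr_ge0 // sumr_ge0 // => k _; apply: frob2_ge0.
pose pmin := \big[Order.min/1]_i p i.
have pmin_gt0 : 0 < pmin.
  by rewrite /pmin; elim/big_ind: _ => // x y x_gt0 y_gt0; rewrite lt_min x_gt0.
have pmin_le i : pmin <= p i by apply: bigmin_le.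
have alpha_gt0 : 0 < alpha by case: f_sc.
exists (alpha / (2 * K) * pmin) => [|s].
  exact: mulr_gt0 (divr_gt0 alpha_gt0 (mulr_gt0 (ltr0Sn _ 1) K_gt0)) pmin_gt0.
set h := bregman f (xss s) (xs s) xhat; set c := alpha / (2 * K).
pose rho i := dotv (selmx (I i) *m (A *m xs s - b)) (selmx (I i) *m (A *m xs s - b)).
apply: le_trans (_ : \sum_i p i * (h - c * rho i) <= _).
  apply: ler_sum => i _; apply: ler_wpM2l; first exact: ltW.
  exact: bregman_iterate_residual_step.
rewrite (eq_bigr (fun i => p i * h - c * (p i * rho i))) => [|i _]; last by ring.
rewrite sumrB -mulr_suml p_sum1 mul1r -mulr_sumr lerD2l lerN2 -mulrA.
apply: ler_wpM2l; first by rewrite divr_ge0 ?mulr_ge0 ?ltW.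
have := dotv_le_sum_selmx (A *m xs s - b) cover.
move=> /(ler_wpM2l (ltW pmin_gt0)) /le_trans; apply.
by rewrite mulr_sumr; apply: ler_sum => i _; apply: ler_wpM2r; [exact: dotvv_ge0 | exact: pmin_le].
Qed.

Lemma expected_bregman_contraction C : 0 < C ->
  (forall s, bregman f (xss s) (xs s) xhat <= C * norm2 (A *m xs s - b) ^+ 2) ->
  exists2 q, 0 < q < 1 & forall s,
    \sum_i p i * bregman f (xss (rcons s i)) (xs (rcons s i)) xhat <=
      q * bregman f (xss s) (xs s) xhat.
Proof.
move=> C_gt0 err_bound; have [a a_gt0 decr] := expected_bregman_decrease.
(* [1 - a / C] could be nonpositive; enlarging [C] to [C + a] keeps [q] in (0, 1). *)
have Ca_gt0 : 0 < C + a by rewrite addr_gt0.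
exists (1 - a / (C + a)) => [|s].
  by rewrite subr_gt0 ltr_pdivrMr // mul1r ltrDr C_gt0 ltrBlDr ltrDl divr_gt0.
apply: ler_contraction a_gt0 (ltW C_gt0) (dotvv_ge0 _) _ (decr s).
by rewrite -norm2_sqr.
Qed.

End Iterates.

Theorem theorem4p5 (R : realType) (m n r : nat)
  (A : 'M[R]_(m, n)) (b : 'cV[R]_m) (alpha : R) (f : 'cV[R]_n -> R)
  (xhat : 'cV[R]_n)
  (I : 'I_r -> {set 'I_m}) (inC : 'I_r -> bool) (p : 'I_r -> R)
  (xs xss : seq 'I_r -> 'cV[R]_n) :
  mrange A b ->
  strongly_convex alpha f ->
  A *m xhat = b ->
  (forall x, A *m x = b -> f xhat <= f x) ->
  calm (subdiff f) xhat ->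
  lin_regular (subdiff f xhat) (mrange A^T) ->
  (forall j : 'I_m, exists i : 'I_r, j \in I i) ->
  (forall i, 0 < p i) -> \sum_(i < r) p i = 1 ->
  mrange A^T (xss [::]) ->
  (forall s, has_grad (conj_fun f) (xss s) (xs s)) ->
  (forall s i, alg_step f A b I inC i (xss s) (xs s) (xss (rcons s i))) ->
  exists q c : R, 0 < q < 1 /\ 0 < c /\
    forall k : nat,
      expect p k.+1 (fun s => bregman f (xss s) (xs s) xhat)
        <= q * expect p k (fun s => bregman f (xss s) (xs s) xhat) /\
      expect p k (fun s => norm2 (xs s - xhat)) <= c * Num.sqrt q ^+ k.
Proof.
(* [b \in R(A)] and the optimality of [xhat] follow from [A xhat = b] and
   [∂f(xhat) ∩ R(A^T) ≠ ∅], which is part of linear regularity. *)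
move=> _ f_sc A_xhat _ [_ [eps [L [eps_gt0 [L_gt0 calm_xhat]]]]].
move=> [ST_neq0 [gamma [gamma_gt0 lin_reg]]] cover p_gt0 p_sum1 range0 grad step.
have [z0 [z0_subgrad _]] := ST_neq0.
have alpha_gt0 : 0 < alpha by case: f_sc.
have p_ge0 i : 0 <= p i := ltW (p_gt0 i).
have subgrad s := grad_conj_subdiff f_sc z0_subgrad (grad s).
pose h0 := bregman f (xss [::]) (xs [::]) xhat.
have [C C_gt0 err_bound] := bregman_error_bound f_sc A_xhat z0_subgrad gamma_gt0 ST_neq0 lin_reg
  eps_gt0 L_gt0 calm_xhat h0.
have err_iterate s : bregman f (xss s) (xs s) xhat <= C * norm2 (A *m xs s - b) ^+ 2.
  apply: err_bound (grad s) (iterate_range A_xhat grad step range0 s) _.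
  exact: bregman_iterate_le f_sc A_xhat z0_subgrad grad step s.
have [q /andP[q_gt0 q_lt1] contr] := expected_bregman_contraction f_sc A_xhat z0_subgrad
  grad step cover p_gt0 p_sum1 C_gt0 err_iterate.
have rate := expect_contraction p_ge0 p_sum1 (ltW q_gt0) contr.
exists q, (h0 / alpha + 2^-1); split; first by rewrite q_gt0.
split=> [|k].
  by rewrite ltr_wpDl ?invr_gt0 // divr_ge0 ?(bregman_ge0 _ f_sc (subgrad _)) ?ltW.
split; first exact: (rate k).1.
apply: (expect_le_sqrt_rate p_ge0 p_sum1 (d := fun s => norm2 (xs s - xhat)) alpha_gt0 q_gt0 _
  (rate k).2) => s.
by rewrite norm2_distC; apply: bregman_ge_sqr f_sc (subgrad s).
Qed.
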